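(* Let $f\colon\mathbb{R}^n\to\mathbb{R}$ be continuous. Suppose there is $\gamma>0$ such that (i) the set $S_\gamma=\{z\in\mathbb{R}^n : f(z)\le \inf f+\gamma\}$ is compact, and (ii) every $x\in S_\gamma$ with $0\in\partial f(x)$ is a global minimizer of $f$. Let the Moreau Adaptive Descent (MAD) parameters $x^1\in\mathbb{R}^n$, $\alpha$, $t_1,\tau,T\in(0,\infty)$, $\eta_-\in(0,1)$, $\eta_+>1$, $\theta\in(0,1)$, $\delta>0$ and an initial vector $g^0\in\mathbb{R}^n$ satisfy: $\alpha\in(1-\sqrt{\eta_-},\,1+\sqrt{\eta_-})$, and there is a global minimizer $x^\star$ of $f$ such that $t_1\ge\tau$ and $T\ge t_1\ge \|x^\star-x^1\|^2/(2\gamma)$. Let $\{x^k\}$ be generated by MAD (described in the context), with any choice of $\hat x^k\in\operatorname{prox}_{t_kf}(x^k)$ at each step. Then $$\lim_{k\to\infty} f(x^k)=\min_{x\in\mathbb{R}^n} f(x),$$ and some subsequence $\{x^{n_k}\}\subseteq\{x^k\}$ converges to a global minimizer of $f$.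
   Context: For $t>0$, $\operatorname{prox}_{tf}(x)=\operatorname{argmin}_{z\in\mathbb{R}^n}\big(f(z)+\frac{1}{2t}\|z-x\|^2\big)$ (a set) and the Moreau envelope is $u(x,t)=\inf_{z\in\mathbb{R}^n}\big(f(z)+\frac{1}{2t}\|z-x\|^2\big)$. The subdifferential $\partial f(\bar x)$ is the set of all $v\in\mathbb{R}^n$ such that $f(x)\ge f(\bar x)+\langle v,x-\bar x\rangle+o(\|x-\bar x\|)$ as $x\to\bar x$. MAD: for $k=1,2,\dots$: choose $\hat x^k\in\operatorname{prox}_{t_kf}(x^k)$; set $g^k=(x^k-\hat x^k)/t_k$; set $x^{k+1}=x^k-\alpha t_k g^k$; set $t_{k+1}=\min(\eta_+t_k,T)$ if $\|g^k\|\le\theta\|g^{k-1}\|+\delta$, and $t_{k+1}=\max(\eta_-t_k,\tau)$ otherwise. *)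

From HB Require Import structures.
From mathcomp Require Import all_boot all_order all_algebra.
From mathcomp Require Import all_classical all_reals all_analysis.
Set Implicit Arguments. Unset Strict Implicit. Unset Printing Implicit Defensive.
Import Order.TTheory GRing.Theory Num.Theory.
Import numFieldNormedType.Exports.
Local Open Scope classical_set_scope.
Local Open Scope ring_scope.

Section Defs.
Variables (R : realType) (n : nat).
Notation V := 'rV[R]_n.

Definition dotv (u v : V) : R := \sum_(i < n) u 0 i * v 0 i.
Definition enorm (u : V) : R := Num.sqrt (dotv u u).

Definition is_global_min (f : V -> R) (x : V) : Prop := forall z, f x <= f z.

Definition inff (f : V -> R) : R := inf (range f).

Definition S_gamma (f : V -> R) (gamma : R) : set V :=
  [set z | f z <= inff f + gamma].

(* (Frechet) subdifferential: v in ∂f(xb) iff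
   f x >= f xb + <v, x - xb> + o(|x - xb|) as x -> xb *)
Definition subdiff (f : V -> R) (xb : V) : set V :=
  [set v | forall eps : R, 0 < eps -> exists2 d : R, 0 < d &
     forall x : V, enorm (x - xb) < d ->
       f xb + dotv v (x - xb) - eps * enorm (x - xb) <= f x].

Definition prox (f : V -> R) (t : R) (x : V) : set V :=
  [set z | forall w : V,
     f z + (enorm (z - x)) ^+ 2 / (2 * t) <= f w + (enorm (w - x)) ^+ 2 / (2 * t)].

Definition MAD_run (f : V -> R) (x1 : V) (alpha t1 tau T eta_m eta_p theta delta : R)
    (x xhat g : nat -> V) (t : nat -> R) : Prop :=
  [/\ x 1%N = x1, t 1%N = t1 &
    forall k : nat, (1 <= k)%N ->
      [/\ xhat k \in prox f (t k) (x k),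
          g k = (t k)^-1 *: (x k - xhat k),
          x k.+1 = x k - (alpha * t k) *: g k &
          t k.+1 = if enorm (g k) <= theta * enorm (g k.-1) + delta
                   then Order.min (eta_p * t k) T
                   else Order.max (eta_m * t k) tau]].
End Defs.

From HB Require Import structures.
From mathcomp Require Import all_boot all_order all_algebra.
From mathcomp Require Import all_classical all_reals all_analysis.
From mathcomp Require Import ring lra.
Import Order.TTheory GRing.Theory Num.Theory.
Import numFieldNormedType.Exports.
Local Open Scope classical_set_scope.
Local Open Scope ring_scope.

(* The values U_k = f(xhat^k) + |xhat^k - x^k|^2 / (2 t_k) of the Moreau
   envelope at the iterates decrease by at least c |xhat^k - x^k|^2 per step:
   xhat^k - x^(k+1) = (1 - alpha)(xhat^k - x^k) is a competitor in the next
   proximal problem, t_(k+1) >= eta_- t_k, and (1 - alpha)^2 < eta_-.  The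
   choice of t_1 gives U_1 <= min f + gamma, so every xhat^k lies in the
   compact set S_gamma and the residuals xhat^k - x^k tend to 0.  Along a
   convergent subsequence, the proximal inequalities pass to the limit c as
   f c <= f w + |w - c|^2 / (2 tau) for all w, whence 0 is a subgradient at
   c and c is a global minimizer; f(x^k) -> min f then follows because every
   subsequence has such a further subsequence.  The acceptance test of the
   step-size rule plays no role: both branches keep t_k in [tau, T] and
   t_(k+1) >= eta_- t_k. *)

Set Implicit Arguments. Unset Strict Implicit.

Section euclidean_norm.
Variables (R : realType) (n : nat).
Implicit Types u : 'rV[R]_n.

Lemma dotv_ge0 u : 0 <= dotv u u.
Proof. by apply: sumr_ge0 => i _; rewrite -expr2 sqr_ge0. Qed.

Lemma enorm_ge0 u : 0 <= enorm u.
Proof. exact: sqrtr_ge0. Qed.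

Lemma dot0v u : dotv 0 u = 0.
Proof. by rewrite /dotv big1 // => i _; rewrite mxE mul0r. Qed.

Lemma enormZ (c : R) u : enorm (c *: u) = `|c| * enorm u.
Proof.
rewrite /enorm; have -> : dotv (c *: u) (c *: u) = c ^+ 2 * dotv u u.
  by rewrite /dotv mulr_sumr; apply: eq_bigr => i _; rewrite !mxE; ring.
by rewrite sqrtrM ?sqr_ge0 // sqrtr_sqr.
Qed.

Lemma normr_le_enorm u : `|u| <= enorm u.
Proof.
rewrite [`|u|]mx_normrE; apply/bigmax_leP; split; first exact: enorm_ge0.
move=> [i j] _ /=; rewrite (ord1 i) -sqrtr_sqr ler_sqrt ?dotv_ge0 //.
rewrite /dotv (bigD1 j) //= -expr2 lerDl.
by apply: sumr_ge0 => k _; rewrite -expr2 sqr_ge0.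
Qed.

Lemma cvg_enorm (T : Type) (F : set_system T) (FF : Filter F)
    (u : T -> 'rV[R]_n) c :
  u @ F --> c -> enorm (u i) @[i --> F] --> enorm c.
Proof.
apply: continuous_cvg; apply: continuous_comp; last exact: sqrt_continuous.
apply: (continuous_big add_continuous) => i _ v.
by apply: continuousM; exact: coord_continuous.
Qed.

End euclidean_norm.

Lemma frequently_subseq (Q : nat -> nat -> Prop) :
  (forall j N, exists2 k, (N <= k)%N & Q j k) ->
  exists phi : nat -> nat,
    (forall k, (phi k < phi k.+1)%N) /\ forall k, Q k (phi k).
Proof.
move=> hQ; have {}hQ (jN : nat * nat) : exists k, (jN.2 <= k)%N /\ Q jN.1 k.
  by have [k] := hQ jN.1 jN.2; exists k.
have [sel hsel] := choice hQ.
pose fix phi k := if k is k'.+1 then sel (k, (phi k').+1) else sel (0, 0)%N.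
exists phi; split => [k|[|k]].
- exact: (hsel (k.+1, _)).1.
- exact: (hsel (0, 0)%N).2.
- exact: (hsel (k.+1, _)).2.
Qed.

Lemma increasing_cvgny (phi : nat -> nat) :
  (forall k, (phi k < phi k.+1)%N) -> phi @ \oo --> \oo.
Proof.
move=> phi_incr; have le_phi k : (k <= phi k)%N.
  by elim: k => // k IH; exact: leq_ltn_trans IH (phi_incr k).
by apply/cvgnyPge => A; exists A => // k /leq_trans; apply.
Qed.

Section subsequences.
Variables (R : realType) (V : normedModType R).

Lemma compact_subseq_cvg (K : set V) (y : nat -> V) :
  compact K -> (\forall k \near \oo, K (y k)) ->
  exists (phi : nat -> nat) (c : V),
    [/\ forall k, (phi k < phi k.+1)%N, K c & y \o phi @ \oo --> c].
Proof.
move=> cK yK; have [c [Kc clc]] := cK (y @ \oo) _ yK.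
have near_c j N : exists2 k, (N <= k)%N & `|c - y k| < j.+1%:R^-1.
  have tail_N : (y @ \oo) (y @` [set k | (N <= k)%N]).
    by exists N => // k Nk; exists k.
  have ball_c : nbhs c (ball c j.+1%:R^-1).
    by apply: nbhsx_ballx; rewrite invr_gt0.
  have [_ [[k Nk <-]]] := clc _ _ tail_N ball_c.
  by rewrite -ball_normE; exists k.
have [phi [phi_incr phi_c]] := frequently_subseq near_c.
exists phi, c; split => //; apply/cvgrPdist_lt => e e_gt0.
near=> k; apply: lt_trans (phi_c k) _; near: k.
exact: near_infty_natSinv_lt (PosNum e_gt0).
Unshelve. all: by end_near. Qed.

Lemma cvg_subsubseq (u : nat -> V) (l : V) :
  (forall psi : nat -> nat, (forall k, (psi k < psi k.+1)%N) ->
     exists phi : nat -> nat,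
       (forall k, (phi k < phi k.+1)%N) /\ u \o psi \o phi @ \oo --> l) ->
  u @ \oo --> l.
Proof.
move=> sub; apply/cvgrPdist_lt => e e_gt0; apply: contrapT => far.
have far_often (j : nat) N : exists2 k, (N <= k)%N & ~ `|l - u k| < e.
  apply: contrapT => close; apply: far; exists N => // k /= Nk.
  by apply: contrapT => ?; apply: close; exists k.
have [psi [psi_incr psi_far]] := frequently_subseq far_often.
have [phi [_ /cvgrPdist_lt /(_ e e_gt0) [N _ close]]] := sub psi psi_incr.
exact: psi_far (phi N) (close N (leqnn N)).
Qed.

End subsequences.

Section proximal_point.
Variables (R : realType) (n : nat) (f : 'rV[R]_n -> R).
Implicit Types (x z w : 'rV[R]_n) (t : R).

Definition prox_objective t x z := f z + enorm (z - x) ^+ 2 / (2 * t).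

Lemma prox_min t x z : z \in prox f t x ->
  forall w, prox_objective t x z <= prox_objective t x w.
Proof. by rewrite in_setE. Qed.

Lemma le_prox_objective t x z : 0 < t -> f z <= prox_objective t x z.
Proof. by move=> t_gt0; rewrite lerDl divr_ge0 ?sqr_ge0 // mulr_ge0 // ltW. Qed.

Lemma prox_descent (t t' T eta alpha : R) x x' z z' :
  0 < t -> t <= T -> 0 < eta -> eta * t <= t' -> (1 - alpha) ^+ 2 < eta ->
  z' \in prox f t' x' -> z - x' = (1 - alpha) *: (z - x) ->
  prox_objective t' x' z'
    + (1 - (1 - alpha) ^+ 2 / eta) / (2 * T) * enorm (z - x) ^+ 2
    <= prox_objective t x z.
Proof.
move=> t_gt0 t_le_T eta_gt0 eta_t_le rate z'_prox z_x'.
have := prox_min z'_prox z.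
rewrite /prox_objective z_x' enormZ exprMn real_normK ?num_real //.
set a : R := (1 - alpha) ^+ 2; set D := enorm (z - x) ^+ 2 => z'_le.
have D_ge0 : 0 <= D by rewrite sqr_ge0.
have step_le : a / (2 * t') <= a / eta / (2 * t).
  rewrite -mulrA -invfM; apply: ler_wpM2l; first exact: sqr_ge0.
  rewrite lef_pV2 ?posrE; nra.
have rate_le : (1 - a / eta) / (2 * T) <= (1 - a / eta) / (2 * t).
  apply: ler_wpM2l; first by rewrite subr_ge0 ler_pdivrMr // mul1r ltW.
  rewrite lef_pV2 ?posrE; nra.
have sum_le : a / (2 * t') + (1 - a / eta) / (2 * T) <= (2 * t)^-1.
  have -> : (2 * t)^-1 = a / eta / (2 * t) + (1 - a / eta) / (2 * t).
    by rewrite -mulrDl addrC subrK mul1r.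
  exact: lerD.
have := ler_wpM2l D_ge0 sum_le; lra.
Qed.

Lemma quadratic_minorant_subdiff0 x (r : R) : 0 < r ->
  (forall w, f x <= f w + enorm (w - x) ^+ 2 / r) -> subdiff f x 0.
Proof.
move=> r_gt0 x_quad e e_gt0; exists (e * r) => [|w]; first exact: mulr_gt0.
rewrite dot0v addr0; set d := enorm (w - x) => d_lt.
have : d ^+ 2 / r <= e * d.
  rewrite expr2 -mulrA mulrC; apply: ler_wpM2r; first exact: enorm_ge0.
  by rewrite ltW // ltr_pdivrMr.
by have := x_quad w; rewrite -/d; lra.
Qed.

Lemma prox_cluster_quadratic_minorant (a b : nat -> 'rV[R]_n)
    (s : nat -> R) (tau : R) (c : 'rV[R]_n) :
  continuous f -> 0 < tau -> a @ \oo --> c -> b @ \oo --> c ->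
  (\forall k \near \oo, tau <= s k /\ b k \in prox f (s k) (a k)) ->
  forall w, f c <= f w + enorm (w - c) ^+ 2 / (2 * tau).
Proof.
move=> f_cont tau_gt0 a_c b_c b_prox w.
have fb_c : f \o b @ \oo --> f c by exact: cvg_comp b_c (f_cont c).
have wa_c : enorm (w - a k) @[k --> \oo] --> enorm (w - c).
  by apply: cvg_enorm; apply: cvgB => //; exact: cvg_cst.
pose bound k := f w + enorm (w - a k) ^+ 2 / (2 * tau).
apply: (@ler_cvg_to _ _ _ _ _ bound _ _ fb_c).
  by apply: cvgD; [exact: cvg_cst | apply: cvgMl; rewrite expr2; exact: cvgM].
near=> i; have [tau_le b_prox_i] : tau <= s i /\ b i \in prox f (s i) (a i)
  by near: i.
have s_gt0 : 0 < s i by exact: lt_le_trans tau_le.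
apply: le_trans (le_prox_objective _ _ s_gt0) _.
apply: le_trans (prox_min b_prox_i w) _; rewrite lerD2l.
by apply: ler_wpM2l; rewrite ?sqr_ge0 // lef_pV2 ?posrE ?ler_pM2l ?mulr_gt0.
Unshelve. all: by end_near. Qed.

End proximal_point.

Lemma sqr_dist_lt (R : rcfType) (y a e : R) :
  y - Num.sqrt e < a < y + Num.sqrt e -> (y - a) ^+ 2 < e.
Proof.
rewrite -ltr_distl distrC => ay_lt.
have e_gt0 : 0 < e by rewrite -sqrtr_gt0; exact: le_lt_trans ay_lt.
by rewrite -ltr_sqrt // sqrtr_sqr.
Qed.

Lemma descent_residual_cvg0 (R : realType) (u d : R^nat) (c : R) :
  0 < c -> (forall k, 0 <= d k) -> (forall k, u k.+1 + c * d k <= u k) ->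
  has_lbound (range u) -> d @ \oo --> 0.
Proof.
move=> c_gt0 d_ge0 descent u_lb.
have u_noninc : nonincreasing_seq u.
  apply/nonincreasing_seqP => k; apply: le_trans (descent k).
  by rewrite lerDl mulr_ge0 // ltW.
have [l u_l] := (cvg_ex _).1 (nonincreasing_is_cvgn u_noninc u_lb).
have gap0 : (u k - u k.+1) / c @[k --> \oo] --> 0.
  rewrite -(mul0r c^-1) -(subrr l); apply: cvgMl; apply: cvgB => //.
  by rewrite cvg_shiftS.
apply: (squeeze_cvgr _ (cvg_cst 0) gap0); near=> k.
rewrite d_ge0 ler_pdivlMr //; have := descent k; lra.
Unshelve. all: by end_near. Qed.

Lemma inff_global_min (R : realType) n (f : 'rV[R]_n -> R) xs :
  is_global_min f xs -> inff f = f xs.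
Proof.
move=> xs_min; apply/le_anti/andP; split.
  by apply: ge_inf; [exists (f xs) => _ [z _ <-]; exact: xs_min | exists xs].
by apply: lb_le_inf; [exists (f xs), xs | move=> _ [z _ <-]; exact: xs_min].
Qed.

Section MAD.
Variables (R : realType) (n : nat) (f : 'rV[R]_n -> R).
Variables (x1 : 'rV[R]_n) (alpha t1 tau T eta_m eta_p theta delta : R).
Variables (x xhat g : nat -> 'rV[R]_n) (t : nat -> R).
Hypothesis run : MAD_run f x1 alpha t1 tau T eta_m eta_p theta delta x xhat g t.
Hypotheses (tau_gt0 : 0 < tau) (tau_le_t1 : tau <= t1) (t1_le_T : t1 <= T).
Hypotheses (eta_m_gt0 : 0 < eta_m) (eta_m_lt1 : eta_m < 1) (eta_p_gt1 : 1 < eta_p).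

Lemma MAD_stepsize_bounds k : (1 <= k)%N -> tau <= t k <= T.
Proof.
case: run => _ t_1 step; elim: k => [//|k IH] _.
have [->|k_gt0] := posnP k; first by rewrite t_1 tau_le_t1.
have /andP[tau_le t_le] := IH k_gt0; have [_ _ _ ->] := step k k_gt0.
have t_gt0 : 0 < t k by exact: lt_le_trans tau_le.
have tau_le_T : tau <= T by exact: le_trans t_le.
case: ifP => _; apply/andP; split.
- by rewrite le_min tau_le_T andbT (le_trans tau_le) // ler_peMl // ltW.
- by rewrite ge_min lexx orbT.
- by rewrite le_max lexx orbT.
- by rewrite ge_max tau_le_T andbT (le_trans _ t_le) // ler_piMl // ltW.
Qed.

Lemma MAD_stepsize_gt0 k : (1 <= k)%N -> 0 < t k.
Proof. by move/MAD_stepsize_bounds/andP => [/(lt_le_trans tau_gt0)]. Qed.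

Lemma MAD_stepsize_decay k : (1 <= k)%N -> eta_m * t k <= t k.+1.
Proof.
move=> k_gt0; have t_gt0 := MAD_stepsize_gt0 k_gt0.
have /andP[_ t_le] := MAD_stepsize_bounds k_gt0.
case: run => _ _ /(_ k k_gt0) [_ _ _ ->]; case: ifP => _.
  rewrite le_min ler_pM2r // (ltW (lt_trans eta_m_lt1 eta_p_gt1)) /=.
  by apply: le_trans t_le; rewrite ler_piMl // ltW.
by rewrite le_max lexx.
Qed.

Lemma MAD_prox_residual k : (1 <= k)%N ->
  xhat k - x k.+1 = (1 - alpha) *: (xhat k - x k).
Proof.
move=> k_gt0; have t_neq0 : t k != 0 by rewrite gt_eqF // MAD_stepsize_gt0.
case: run => _ _ /(_ k k_gt0) [_ -> -> _].
by apply/rowP => i; rewrite !mxE; field.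
Qed.

Hypothesis rate : (1 - alpha) ^+ 2 < eta_m.

Let c : R := (1 - (1 - alpha) ^+ 2 / eta_m) / (2 * T).
Let U k := prox_objective f (t k) (x k) (xhat k).
Let D k := enorm (xhat k - x k) ^+ 2.

Lemma MAD_descent k : (1 <= k)%N -> U k.+1 + c * D k <= U k.
Proof.
move=> k_gt0; have /andP[_ t_le] := MAD_stepsize_bounds k_gt0.
case: run => _ _ /(_ k.+1 isT) [xhat_prox _ _ _].
apply: prox_descent (MAD_stepsize_gt0 k_gt0) t_le eta_m_gt0 _ rate xhat_prox _.
  exact: MAD_stepsize_decay.
exact: MAD_prox_residual.
Qed.

Lemma MAD_rate_gt0 : 0 < c.
Proof.
rewrite divr_gt0 ?mulr_gt0 ?(lt_le_trans tau_gt0 (le_trans tau_le_t1 t1_le_T)) //.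
by rewrite subr_gt0 ltr_pdivrMr // mul1r.
Qed.

Variables (gamma : R) (xs : 'rV[R]_n).
Hypotheses (xs_min : is_global_min f xs) (gamma_gt0 : 0 < gamma).
Hypothesis t1_ge : enorm (xs - x1) ^+ 2 / (2 * gamma) <= t1.

Lemma MAD_envelope_bounds k : (1 <= k)%N -> f xs <= U k <= f xs + gamma.
Proof.
move=> k_gt0; apply/andP; split.
  exact: le_trans (xs_min _) (le_prox_objective f _ _ (MAD_stepsize_gt0 k_gt0)).
elim: k k_gt0 => [//|k IH] _; have [->|k_gt0] := posnP k.
  case: run => x_1 t_1 /(_ 1%N isT) [xhat_prox _ _ _].
  apply: le_trans (prox_min xhat_prox xs) _.
  rewrite /prox_objective x_1 t_1 lerD2l.
  have t1_gt0 : 0 < t1 := lt_le_trans tau_gt0 tau_le_t1.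
  by move: t1_ge; rewrite !ler_pdivrMr ?mulr_gt0 //; lra.
apply: le_trans (IH k_gt0); apply: le_trans (MAD_descent k_gt0).
by rewrite lerDl mulr_ge0 ?sqr_ge0 // ltW // MAD_rate_gt0.
Qed.

Lemma MAD_prox_sublevel k : (1 <= k)%N -> S_gamma f gamma (xhat k).
Proof.
move=> k_gt0; rewrite /S_gamma /= (inff_global_min xs_min).
have /andP[_ U_le] := MAD_envelope_bounds k_gt0.
exact: le_trans (le_prox_objective f _ _ (MAD_stepsize_gt0 k_gt0)) U_le.
Qed.

Lemma MAD_residual_cvg0 : xhat k - x k @[k --> \oo] --> (0 : 'rV[R]_n).
Proof.
have D_cvg0 : D @ \oo --> 0.
  rewrite -cvg_shiftS; apply: (@descent_residual_cvg0 _ (fun k => U k.+1) _ c).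
  - exact: MAD_rate_gt0.
  - by move=> k; rewrite sqr_ge0.
  - by move=> k; exact: MAD_descent.
  by exists (f xs) => _ [k _ <-]; have /andP[] := MAD_envelope_bounds (ltn0Sn k).
have enorm_cvg0 : enorm (xhat k - x k) @[k --> \oo] --> 0.
  have -> : (fun k => enorm (xhat k - x k)) = Num.sqrt \o D.
    by apply/funext => k; rewrite /= /D sqrtr_sqr ger0_norm ?enorm_ge0.
  by rewrite -sqrtr0; exact: (cvg_comp _ _ D_cvg0 (@sqrt_continuous R 0)).
apply: norm_cvg0; apply: (squeeze_cvgr _ (cvg_cst 0) enorm_cvg0).
by near=> k; rewrite normr_ge0 normr_le_enorm.
Unshelve. all: by end_near. Qed.

Hypotheses (f_cont : continuous f) (S_compact : compact (S_gamma f gamma)).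
Hypothesis S_crit :
  forall z, S_gamma f gamma z -> subdiff f z 0 -> is_global_min f z.

Lemma MAD_subseq_global_min (psi : nat -> nat) :
  (forall k, (psi k < psi k.+1)%N) ->
  exists (phi : nat -> nat) (xb : 'rV[R]_n),
    [/\ forall k, (phi k < phi k.+1)%N, is_global_min f xb &
        x \o psi \o phi @ \oo --> xb].
Proof.
move=> psi_incr; have psi_oo := increasing_cvgny psi_incr.
have near_S : \forall k \near \oo, S_gamma f gamma ((xhat \o psi) k).
  apply: (psi_oo [set m | S_gamma f gamma (xhat m)]).
  by exists 1%N => //; exact: MAD_prox_sublevel.
have [phi [xb [phi_incr S_xb xhat_xb]]] := compact_subseq_cvg S_compact near_S.
have sub_oo : psi \o phi @ \oo --> \oo.
  exact: cvg_comp (increasing_cvgny phi_incr) psi_oo.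
have x_xb : x \o psi \o phi @ \oo --> xb.
  pose r k := xhat (psi (phi k)) - x (psi (phi k)).
  have -> : x \o psi \o phi = fun k => xhat (psi (phi k)) - r k.
    by apply/funext => k; rewrite /r /= opprB addrC subrK.
  rewrite -[xb]subr0; apply: cvgB => //.
  exact: (cvg_comp _ _ sub_oo MAD_residual_cvg0).
exists phi, xb; split => //; apply: S_crit S_xb _.
apply: (@quadratic_minorant_subdiff0 _ _ _ _ (2 * tau)); first by rewrite mulr_gt0.
apply: (prox_cluster_quadratic_minorant (s := t \o psi \o phi)) f_cont tau_gt0
  x_xb xhat_xb _.
apply: (sub_oo [set k | tau <= t k /\ xhat k \in prox f (t k) (x k)]).
exists 1%N => // k k_gt0.
split; first by have /andP[] := MAD_stepsize_bounds k_gt0.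
by case: run => _ _ /(_ k k_gt0) [].
Qed.

End MAD.

Unset Implicit Arguments. Set Strict Implicit.

Theorem theorem1 (R : realType) (n : nat) (f : 'rV[R]_n -> R) (gamma : R)
  (x1 : 'rV[R]_n) (alpha t1 tau T eta_m eta_p theta delta : R) (g0 : 'rV[R]_n)
  (x xhat g : nat -> 'rV[R]_n) (t : nat -> R) :
  continuous f ->
  0 < gamma ->
  compact (S_gamma f gamma) ->
  (forall z, S_gamma f gamma z -> subdiff f z 0 -> is_global_min f z) ->
  0 < alpha -> 0 < t1 -> 0 < tau -> 0 < T ->
  0 < eta_m < 1 -> 1 < eta_p -> 0 < theta < 1 -> 0 < delta ->
  1 - Num.sqrt eta_m < alpha < 1 + Num.sqrt eta_m ->
  (exists xs : 'rV[R]_n, [/\ is_global_min f xs, tau <= t1, t1 <= T &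
       (enorm (xs - x1)) ^+ 2 / (2 * gamma) <= t1]) ->
  g 0%N = g0 ->
  MAD_run f x1 alpha t1 tau T eta_m eta_p theta delta x xhat g t ->
  (fun k => f (x k)) @ \oo --> inff f /\
  exists (phi : nat -> nat) (xb : 'rV[R]_n),
    [/\ (forall k, (phi k < phi k.+1)%N), is_global_min f xb &
        (x \o phi) @ \oo --> xb].
Proof.
move=> f_cont gamma_gt0 S_compact S_crit _ _ tau_gt0 _ /andP[eta_m_gt0 eta_m_lt1]
  eta_p_gt1 _ _ alpha_range [xs [xs_min tau_le_t1 t1_le_T t1_ge]] _ run.
have subseq_min := MAD_subseq_global_min run tau_gt0 tau_le_t1 t1_le_T eta_m_gt0
  eta_m_lt1 eta_p_gt1 (sqr_dist_lt alpha_range) xs_min gamma_gt0 t1_ge f_cont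
  S_compact S_crit.
split; last first.
  have [phi [xb [phi_incr xb_min x_xb]]] := subseq_min id ltnSn.
  by exists phi, xb.
rewrite (inff_global_min xs_min); apply: cvg_subsubseq => psi psi_incr.
have [phi [xb [phi_incr xb_min x_xb]]] := subseq_min psi psi_incr.
have -> : f xs = f xb by apply/le_anti; rewrite xs_min xb_min.
by exists phi; split => //; exact: cvg_comp x_xb (f_cont xb).
Qed.
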